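(* There exist an absolute constant $C>0$ and an integer $n_0$ such that for all $0<b<B\le1$ and every $n\ge n_0$ there is an instance $\langle A,f,c\rangle$ with $|A|=n$, $f$ subadditive, and $p(\{i\})\le b$ for all $i\in A$, such that $$\frac{\textsc{Max-Reward}(B)}{\textsc{Max-Reward}(b)}\ge C\sqrt n.$$
   Context: An instance $\langle A,f,c\rangle$ consists of a finite set $A$ of agents, a monotone nondecreasing $f:2^A\to[0,1]$, and costs $c_i\ge0$. For $S\subseteq A$, $i\in S$: $f_S(i)=f(S)-f(S\setminus\{i\})$; $p(S)=\sum_{i\in S}c_i/f_S(i)$ (conventions: $0$ if $c_i=0=f_S(i)$, $\infty$ if $c_i>0=f_S(i)$). $f$ is subadditive if $f(S\cup S')\le f(S)+f(S')$ for all $S,S'\subseteq A$. $\textsc{Max-Reward}(B)=\max\{f(S):S\subseteq A,\ p(S)\le B\}$. *)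

From Stdlib Require Import Reals.
From mathcomp Require Import all_boot all_order all_algebra.
From mathcomp Require Import reals ereal Rstruct.
Set Implicit Arguments. Unset Strict Implicit. Unset Printing Implicit Defensive.
Import Order.TTheory GRing.Theory Num.Theory.
Local Open Scope ring_scope.

Section Contracts.
Variable A : finType.

Definition valued01 (f : {set A} -> R) : Prop := forall S, 0 <= f S <= 1.
Definition monotone_set (f : {set A} -> R) : Prop :=
  forall S T : {set A}, S \subset T -> f S <= f T.
Definition subadditive (f : {set A} -> R) : Prop :=
  forall S T : {set A}, f (S :|: T) <= f S + f T.
Definition nonneg_costs (c : A -> R) : Prop := forall i, 0 <= c i.

Definition marginal (f : {set A} -> R) (S : {set A}) (i : A) : R :=
  f S - f (S :\ i).

Definition pay_term (f : {set A} -> R) (c : A -> R) (S : {set A}) (i : A)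
  : \bar R :=
  if marginal f S i == 0 then (if c i == 0 then 0%E else +oo%E)
  else (c i / marginal f S i)%:E.

Definition payment (f : {set A} -> R) (c : A -> R) (S : {set A}) : \bar R :=
  (\sum_(i in S) pay_term f c S i)%E.

(* Max-Reward(B) = max { f(S) : p(S) <= B }; f >= 0 and the empty set is
   feasible (for B >= 0), so 0 is a harmless neutral element. *)
Definition max_reward (f : {set A} -> R) (c : A -> R) (B : R) : R :=
  \big[Num.max/0]_(S : {set A} | (payment f c S <= B%:E)%E) f S.
End Contracts.

(** The reward is a symmetric function of [|S|]: it jumps to [1/k] on
    singletons, grows like [|S|/n] clamped to [[1/k, 1 - 1/k]], and jumps to
    [1] on the whole set, where [k = floor (sqrt n)].  The clamp keeps it
    subadditive.  With every cost equal to [m/k], [m = min(b, B/n)], the two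
    jumps make a singleton cost [m <= b] and the whole set cost [n m], which
    lies in [(b, B]].  Every other nonempty set has marginals at most [1/n], and
    nonzero ones only when [|S|/n > 1/k]; its price then exceeds
    [(n/k^2) (n m) >= n m > b].  Hence budget [b] buys reward [1/k] and
    budget [B] buys reward [1], a ratio [k >= sqrt n / 2]. *)
From Stdlib Require Import Reals.
From mathcomp Require Import all_boot all_order all_algebra.
From mathcomp Require Import reals ereal Rstruct lra ring zify.
Import Order.TTheory GRing.Theory Num.Theory.
Local Open Scope ring_scope.

Section Clamp.
Context {F : realDomainType}.
Implicit Types lo hi x y z : F.

Definition clamp lo hi x := Num.max lo (Num.min hi x).

Local Ltac case_ifs := repeat match goal with |- context[if ?b then _ else _] =>
  lazymatch b with context[if _ then _ else _] => fail | _ => case: (boolP b) => ? end end.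
Local Ltac clamp_lra := rewrite /clamp ?maxElt ?minElt; case_ifs; lra.

Lemma clamp_bounds {lo hi} x : lo <= hi -> lo <= clamp lo hi x <= hi.
Proof. by move=> ?; apply/andP; split; clamp_lra. Qed.

Lemma clamp_lipschitz {lo hi x y} : lo <= hi -> y <= x ->
  0 <= clamp lo hi x - clamp lo hi y <= x - y.
Proof. by move=> ? ?; apply/andP; split; clamp_lra. Qed.

Lemma clamp_subadditive lo hi x y z : 0 <= lo -> lo <= hi -> 0 <= y -> 0 <= z ->
  x <= y + z -> clamp lo hi x <= clamp lo hi y + clamp lo hi z.
Proof. by move=> *; clamp_lra. Qed.

Lemma clamp_sum_ge1 lo hi y z : lo <= hi -> 1 <= lo + hi -> 1 <= y + z ->
  1 <= clamp lo hi y + clamp lo hi z.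
Proof. by move=> *; clamp_lra. Qed.

Lemma clamp_lo lo hi x : lo <= hi -> x <= lo -> clamp lo hi x = lo.
Proof. by move=> *; clamp_lra. Qed.

Lemma clamp_hi lo hi x : lo <= hi -> hi <= x -> clamp lo hi x = hi.
Proof. by move=> *; clamp_lra. Qed.
End Clamp.

Section MaxReward.
Context {A : finType} {f : {set A} -> R} {c : A -> R} {B : R}.

Lemma max_reward_ge {S} : (payment f c S <= B%:E)%E -> f S <= max_reward f c B.
Proof. by move=> hS; rewrite /max_reward (bigD1 S) //= le_max lexx. Qed.

Lemma max_reward_le x : 0 <= x ->
  (forall S, (payment f c S <= B%:E)%E -> f S <= x) -> max_reward f c B <= x.
Proof. by move=> x0 hx; apply: bigmax_le. Qed.
End MaxReward.

Section CardFunction.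
Context {A : finType} (phi : nat -> R).

Definition card_fun (S : {set A}) : R := phi #|S|.
Definition increment (s : nat) : R := (phi s - phi s.-1)%R.

Lemma card_fun_monotone :
  (forall s t, (s <= t <= #|A|)%N -> phi s <= phi t) -> monotone_set card_fun.
Proof. by move=> mono S T ST; apply: mono; rewrite subset_leq_card ?max_card. Qed.

Lemma card_fun_subadditive :
  (forall s t u, (u <= s + t)%N -> (s <= u)%N -> (t <= u)%N -> (u <= #|A|)%N ->
     phi u <= phi s + phi t) ->
  subadditive card_fun.
Proof.
move=> sub S T; apply: sub; first exact: leq_card_setU.
- exact/subset_leq_card/subsetUl.
- exact/subset_leq_card/subsetUr.
- exact: max_card.
Qed.

Lemma payment_card_fun (c0 : R) (S : {set A}) : c0 != 0 -> (0 < #|S|)%N ->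
  payment card_fun (fun=> c0) S =
  (if increment #|S| == 0%R then +oo
   else (#|S|%:R * (c0 / increment #|S|))%:E)%E.
Proof.
move=> c0_neq0 S_gt0.
have term i : i \in S -> pay_term card_fun (fun=> c0) S i =
    (if increment #|S| == 0%R then +oo else (c0 / increment #|S|)%:E)%E.
  move=> iS; rewrite /pay_term /marginal /card_fun (cardsD1 i S) iS /increment.
  by case: ifP; rewrite ?(negbTE c0_neq0).
rewrite /payment (eq_bigr _ term); case: ifP => _.
  case/card_gt0P: S_gt0 => i iS; rewrite (bigD1 i iS) /= addye //.
  by rewrite gt_eqF // (lt_le_trans ltNy0) // sume_ge0 // => j _; exact: leey.
by rewrite sumEFin sumr_const mulr_natl.
Qed.
End CardFunction.

Section Profile.
Variables n k : nat.
Hypotheses (k_ge2 : (2 <= k)%N) (kk_le_n : (k * k <= n)%N).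

Definition step : R := (k%:R^-1)%R.

Definition profile (s : nat) : R :=
  (if s == 0%N then 0 else if s == n then 1 else clamp step (1 - step) (s%:R / n%:R))%R.

Lemma n_ge4 : (4 <= n)%N.
Proof. by apply: leq_trans kk_le_n; rewrite (leq_mul k_ge2 k_ge2). Qed.

Lemma n_gt0 : 0 < n%:R :> R.
Proof. by rewrite ltr0n; apply: leq_trans n_ge4. Qed.

Lemma n_neq0 : n%:R != 0 :> R.
Proof. by rewrite gt_eqF // n_gt0. Qed.

Lemma step_gt0 : 0 < step.
Proof. by rewrite invr_gt0 ltr0n; apply: leq_trans k_ge2. Qed.

Lemma step_mulk : step * k%:R = 1.
Proof. by rewrite mulVf // pnatr_eq0; move: k_ge2; lia. Qed.

Lemma step_le_half : step <= 1 - step.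
Proof.
have := step_mulk; have := step_gt0; have : 2 <= k%:R :> R by rewrite ler_nat.
nra.
Qed.

Lemma n_step_sqr_ge1 : 1 <= n%:R * (step * step).
Proof.
have kk : k%:R * k%:R <= n%:R :> R by rewrite -natrM ler_nat.
have := step_mulk; have := step_gt0; nra.
Qed.

Lemma invn_le_step : n%:R^-1 <= step.
Proof.
rewrite -(ler_pM2l n_gt0) mulfV ?n_neq0 //.
have := n_step_sqr_ge1; have := step_le_half; have := step_gt0; have := n_gt0; nra.
Qed.

Lemma natdiv_le {s t} : (s <= t)%N -> s%:R / n%:R <= t%:R / n%:R :> R.
Proof. by move=> st; rewrite ler_pM2r ?invr_gt0 ?n_gt0 // ler_nat. Qed.

Lemma natdiv_ge0 s : 0 <= s%:R / n%:R :> R.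
Proof. by rewrite divr_ge0 // ltW // n_gt0. Qed.

Lemma profile_mid {s} : s != 0%N -> s != n ->
  profile s = clamp step (1 - step) (s%:R / n%:R).
Proof. by rewrite /profile => /negbTE-> /negbTE->. Qed.

Lemma profile0 : profile 0 = 0. Proof. by []. Qed.

Lemma profilen : profile n = 1.
Proof. by rewrite /profile eqxx; case: eqP => // n0; move: n_ge4; rewrite n0. Qed.

Lemma profile_bounds s : 0 <= profile s <= 1.
Proof.
rewrite /profile; case: ifP => _; first by rewrite lexx ler01.
case: ifP => _; first by rewrite ler01 lexx.
have := clamp_bounds (s%:R / n%:R) step_le_half; have := step_gt0.
by move=> ? /andP[? ?]; apply/andP; split; lra.
Qed.

Lemma profile_monotone s t : (s <= t <= n)%N -> profile s <= profile t.
Proof.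
case/andP=> st tn.
have [->|s0] := eqVneq s 0%N; first by case/andP: (profile_bounds t).
have [->|tn'] := eqVneq t n; first by rewrite profilen; case/andP: (profile_bounds s).
rewrite !profile_mid //; [|by move: st s0; lia|by move: st tn tn'; lia].
by case/andP: (clamp_lipschitz step_le_half (natdiv_le st)); lra.
Qed.

Lemma profile_subadditive s t u : (u <= s + t)%N -> (s <= u)%N -> (t <= u)%N ->
  (u <= n)%N -> profile u <= profile s + profile t.
Proof.
move=> ust su tu un.
case/andP: (profile_bounds s) => ? ?; case/andP: (profile_bounds t) => ? ?.
case/andP: (profile_bounds u) => ? ?.
have [s0|s0] := eqVneq s 0%N.
  have -> : t = u by move: s0 ust tu; lia.
  by rewrite s0 profile0 add0r.
have [t0|t0] := eqVneq t 0%N.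
  have -> : s = u by move: t0 ust su; lia.
  by rewrite t0 profile0 addr0.
have [->|sn] := eqVneq s n; first by rewrite profilen; lra.
have [->|tn] := eqVneq t n; first by rewrite profilen; lra.
have u0 : u != 0%N by move: su s0; lia.
rewrite (profile_mid s0 sn) (profile_mid t0 tn).
have frac_sum : u%:R / n%:R <= s%:R / n%:R + t%:R / n%:R :> R.
  by rewrite -mulrDl -natrD; exact: natdiv_le.
have [un'|un'] := eqVneq u n.
  rewrite un' profilen clamp_sum_ge1 ?step_le_half ?subrKC //.
  by move: frac_sum; rewrite un' divff ?n_neq0.
rewrite profile_mid //; apply: clamp_subadditive; rewrite ?natdiv_ge0 //.
  exact: ltW step_gt0.
exact: step_le_half.
Qed.

Lemma profile1 : profile 1 = step.
Proof.
rewrite profile_mid //; last by move: n_ge4; lia.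
by rewrite clamp_lo ?step_le_half // div1r invn_le_step.
Qed.

Lemma increment_first : increment profile 1 = step.
Proof. by rewrite /increment profile1 [profile _]profile0 subr0. Qed.

Lemma increment_last : increment profile n = step.
Proof.
rewrite /increment profilen profile_mid; [|by move: n_ge4; lia|by move: n_ge4; lia].
rewrite clamp_hi ?step_le_half //; first by rewrite opprB addrC subrK.
have -> : (n.-1)%:R / n%:R = 1 - n%:R^-1 :> R.
  by rewrite -subn1 natrB; [field; exact: n_neq0|move: n_ge4; lia].
by have := invn_le_step; lra.
Qed.

Lemma increment_mid_bounds {s} : (2 <= s < n)%N -> 0 <= increment profile s <= n%:R^-1.
Proof.
case/andP=> s2 sn; rewrite /increment !profile_mid; try by move: s2 sn; lia.
have gap : s%:R / n%:R - (s.-1)%:R / n%:R = n%:R^-1 :> R.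
  by rewrite -subn1 natrB; [field; exact: n_neq0|lia].
by move: (clamp_lipschitz step_le_half (natdiv_le (leq_pred s))); rewrite gap.
Qed.

Lemma increment_mid_gt0 {s} : (2 <= s < n)%N -> 0 < increment profile s ->
  step < s%:R / n%:R.
Proof.
case/andP=> s2 sn inc_gt0; rewrite ltNge; apply: contraTN inc_gt0 => s_small.
have s1_small : (s.-1)%:R / n%:R <= step := le_trans (natdiv_le (leq_pred s)) s_small.
rewrite /increment !profile_mid; try by move: s2 sn; lia.
by rewrite !clamp_lo ?step_le_half // subrr ltxx.
Qed.

Section Instance.
Variables b B : R.
Hypotheses (b_gt0 : 0 < b) (b_lt_B : b < B).

Let d := step.
Definition unit_price : R := Num.min b (B / n%:R)%R.
Let m := unit_price.

Definition reward : {set 'I_n} -> R := card_fun profile.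
Definition cost (i : 'I_n) : R := (m * d)%R.

Lemma unit_price_gt0 : 0 < m.
Proof. by rewrite lt_min b_gt0 divr_gt0 ?n_gt0 //; exact: lt_trans b_gt0 b_lt_B. Qed.

Lemma unit_price_le : m <= b.
Proof. by rewrite ge_min lexx. Qed.

Lemma b_lt_total_price : b < n%:R * m.
Proof.
have n2 : 2 <= n%:R :> R by rewrite ler_nat; move: n_ge4; lia.
rewrite /m /unit_price minElt; case: ifPn => _; first by have := b_gt0; nra.
by rewrite mulrC mulfVK // n_neq0.
Qed.

Lemma total_price_le : n%:R * m <= B.
Proof.
have n0 := n_gt0.
rewrite /m /unit_price minElt mulrC; case: ifPn => h.
  by rewrite -ler_pdivlMr // ltW.
by rewrite mulfVK ?n_neq0.
Qed.

Lemma payment_reward (S : {set 'I_n}) : (0 < #|S|)%N ->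
  payment reward cost S =
  (if increment profile #|S| == 0%R then +oo
   else (#|S|%:R * (m * d / increment profile #|S|))%:E)%E.
Proof.
apply: payment_card_fun.
by rewrite mulf_neq0 // gt_eqF // ?unit_price_gt0 ?step_gt0.
Qed.

Lemma payment_singleton (S : {set 'I_n}) : #|S| = 1%N -> payment reward cost S = m%:E.
Proof.
move=> S1; have d_neq0 : d != 0 by rewrite gt_eqF // step_gt0.
by rewrite payment_reward S1 // increment_first // ifN // mul1r mulfK.
Qed.

Lemma payment_total (S : {set 'I_n}) : #|S| = n -> payment reward cost S = (n%:R * m)%:E.
Proof.
move=> Sn; have d_neq0 : d != 0 by rewrite gt_eqF // step_gt0.
rewrite payment_reward Sn ?increment_last // ?ifN ?mulfK //.
by move: n_ge4; lia.
Qed.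

Lemma payment_mid_gt (S : {set 'I_n}) :
  (2 <= #|S| < n)%N -> (b%:E < payment reward cost S)%E.
Proof.
move=> mid; rewrite payment_reward; last by case/andP: mid; lia.
set D := increment _ _; set s := #|S|%:R : R.
have /andP[D_ge0 D_le] := increment_mid_bounds mid.
case: ifPn => D_neq0; first exact: ltey.
have D_gt0 : 0 < D by rewrite lt0r D_neq0.
have s_gt := increment_mid_gt0 mid D_gt0.
have n0 := n_gt0; have d0 := step_gt0.
have m0 := unit_price_gt0; have nm := b_lt_total_price.
have ndd := n_step_sqr_ge1.
have nd_lt_s : n%:R * d < s by rewrite mulrC -ltr_pdivlMr.
have nD_le1 : n%:R * D <= 1 by rewrite -ler_pdivlMl // mulr1.
set q := m * d / D.
have qD : q * D = m * d by rewrite mulfVK.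
have q_gt0 : 0 < q by rewrite divr_gt0 ?mulr_gt0.
have q_ge : n%:R * (m * d) <= q by nra.
have nmd_gt0 : 0 < n%:R * (m * d) by rewrite !mulr_gt0.
have s_gt0 : 0 < s by apply: lt_trans nd_lt_s; rewrite mulr_gt0.
have sq : n%:R * d * (n%:R * (m * d)) < s * q.
  by apply: lt_le_trans (ler_wpM2l (ltW s_gt0) q_ge); rewrite ltr_pM2r.
have regroup : n%:R * d * (n%:R * (m * d)) = n%:R * (d * d) * (n%:R * m) by ring.
rewrite regroup in sq; rewrite lte_fin (lt_trans nm) // (le_lt_trans _ sq) //.
by rewrite ler_peMl // ltW // mulr_gt0.
Qed.

Lemma max_reward_budget_b : max_reward reward cost b = d.
Proof.
have d0 := step_gt0; have n4 := n_ge4.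
have i0 : 'I_n by exists 0%N; lia.
apply/eqP; rewrite eq_le; apply/andP; split; last first.
  have feasible : (payment reward cost [set i0] <= b%:E)%E.
    by rewrite payment_singleton ?cards1 // lee_fin unit_price_le.
  by have := max_reward_ge feasible; rewrite /reward /card_fun cards1 profile1.
apply: max_reward_le; first exact: ltW.
move=> S hS; rewrite /reward /card_fun.
have Sn : (#|S| <= n)%N by rewrite -[X in (_ <= X)%N]card_ord max_card.
have [->|S0] := eqVneq #|S| 0%N; first exact: ltW.
have [->|S1] := eqVneq #|S| 1%N; first by rewrite profile1.
have [Sn'|Sn'] := eqVneq #|S| n.
  by move: hS; rewrite payment_total // lee_fin; have := b_lt_total_price; lra.
by move: hS; rewrite leNgt payment_mid_gt //; lia.
Qed.

Lemma max_reward_budget_B : 1 <= max_reward reward cost B.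
Proof.
have Tn : #|[set: 'I_n]| = n by rewrite cardsT card_ord.
have feasible : (payment reward cost setT <= B%:E)%E.
  by rewrite payment_total // lee_fin total_price_le.
by have := max_reward_ge feasible; rewrite /reward /card_fun Tn profilen.
Qed.

Lemma instance_properties :
  valued01 reward /\ monotone_set reward /\ nonneg_costs cost /\ subadditive reward /\
  (forall i : 'I_n, (payment reward cost [set i] <= b%:E)%E) /\
  0 < max_reward reward cost b /\
  k%:R <= max_reward reward cost B / max_reward reward cost b.
Proof.
have d0 := step_gt0.
split; first by move=> S; exact: profile_bounds.
split; first by apply: card_fun_monotone => s t; rewrite card_ord; exact: profile_monotone.
split; first by move=> i; rewrite mulr_ge0 // ltW // unit_price_gt0.
split.
  by apply: card_fun_subadditive => s t u; rewrite card_ord; exact: profile_subadditive.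
split; first by move=> i; rewrite payment_singleton ?cards1 // lee_fin unit_price_le.
rewrite max_reward_budget_b; split=> //.
by rewrite ler_pdivlMr // mulrC step_mulk max_reward_budget_B.
Qed.
End Instance.
End Profile.

Theorem mainTheorem15 :
  exists (C : R) (n0 : nat), 0 < C /\
    forall (b B : R) (n : nat), 0 < b -> b < B -> B <= 1 -> (n0 <= n)%N ->
      exists (f : {set 'I_n} -> R) (c : 'I_n -> R),
        valued01 f /\ monotone_set f /\ nonneg_costs c /\ subadditive f /\
        (forall i : 'I_n, (payment f c [set i] <= b%:E)%E) /\
        0 < max_reward f c b /\
        C * Num.sqrt (n%:R) <= max_reward f c B / max_reward f c b.
Proof.
exists (1 / 2), 4%N; split; first lra.
move=> b B n b_gt0 b_lt_B _ n_ge4.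
have [k_sqr_le k_succ_sqr_gt] := Nat.sqrt_specif n.
set k := Nat.sqrt n in k_sqr_le k_succ_sqr_gt.
have k_ge2 : (2 <= k)%N by nia.
have kk_le_n : (k * k <= n)%N by lia.
exists (reward n k), (cost n k b B).
have [? [? [? [? [? [? ratio]]]]]] := instance_properties _ _ k_ge2 kk_le_n _ _ b_gt0 b_lt_B.
do 6 (split; first by []).
apply: le_trans ratio.
have two_k_ge0 : 0 <= 2 * k%:R :> R by rewrite mulr_ge0.
have : Num.sqrt n%:R <= 2 * k%:R :> R.
  by rewrite -(ger0_norm two_k_ge0) -sqrtr_sqr ler_sqrt ?sqr_ge0 // -natrM -natrX ler_nat; nia.
lra.
Qed.
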